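(* Let $G$ be a connected graph, let $\mathcal{P}=(X_1,\ldots,X_l)$ be a path decomposition of $G$ of width $k\leq 3$, and let $S$ be a bottleneck set. Then $t_1(S)$ and $t_2(S)$ are well-defined (the sets over which the minimum and maximum are taken are nonempty) and $t_1(S)\leq t_2(S)$, so $I(S)$ is nonempty; moreover: (i) there is at least one green $S$-branch; (ii) the number of $S$-branches colored red, purple or gray is at most $2k$; (iii) the number of $S$-branches colored blue, purple or black is at most $2k$.
   Context: A path decomposition of $G$ is a sequence $(X_1,\ldots,X_l)$ of subsets of $V(G)$ covering $V(G)$, such that every edge lies in some $X_i$, and $X_i\cap X_k\subseteq X_j$ whenever $i\leq j\leq k$; width is $\max_i|X_i|-1$. For a subgraph $H$, $\alpha(H)=\min\{i: X_i\cap V(H)\neq\emptyset\}$, $\beta(H)=\max\{i: X_i\cap V(H)\neq\emptyset\}$. For $S\subseteq V(G)$, an $S$-component is a connected component $H$ of $G-S$ such that every vertex of $S$ has a neighbor in $V(H)$; an $S$-branch is an $S$-component with at least two vertices. $S$ is a bottleneck set if $S\neq\emptyset$ and there are at least $13$ $S$-branches. Define $t_1(S)=\min\{\alpha(H): H \text{ an } S\text{-branch with } S\subseteq X_{\alpha(H)}\cap X_{\alpha(H)-1}\}$ and $t_2(S)=\max\{\beta(H): H \text{ an } S\text{-branch with } S\subseteq X_{\beta(H)}\cap X_{\beta(H)+1}\}$ (with $X_0=X_{l+1}=\emptyset$), and $I(S)=\{t_1(S),\ldots,t_2(S)\}$. Each $S$-branch $H$ is colored: green if $t_1(S)\leq\alpha(H)\leq\beta(H)\leq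 t_2(S)$; red if $\alpha(H)<t_1(S)\leq\beta(H)\leq t_2(S)$; blue if $t_1(S)\leq\alpha(H)\leq t_2(S)<\beta(H)$; purple if $\alpha(H)<t_1(S)\leq t_2(S)<\beta(H)$; gray if $\beta(H)<t_1(S)$; black if $\alpha(H)>t_2(S)$. *)

From mathcomp Require Import all_boot.
Set Implicit Arguments. Unset Strict Implicit. Unset Printing Implicit Defensive.

Section Defs.
Variables (V : finType) (e : rel V).

Definition simple_graph : Prop := symmetric e /\ irreflexive e.
Definition connected_graph : Prop := forall x y : V, connect e x y.

(* Bags are 1-indexed: bag X i = X_i for 1 <= i <= size X, and set0
   otherwise (in particular X_0 = X_{l+1} = set0). *)
Definition bag (X : seq {set V}) (i : nat) : {set V} :=
  if (0 < i) && (i <= size X) then nth set0 X i.-1 else set0.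

Definition is_path_decomposition (X : seq {set V}) : Prop :=
  [/\ forall v : V, exists2 i, (1 <= i <= size X) & v \in bag X i,
      forall u v : V, e u v -> exists2 i, (1 <= i <= size X) &
                                 (u \in bag X i) && (v \in bag X i)
    & forall i j k, 1 <= i -> i <= j -> j <= k -> k <= size X ->
        bag X i :&: bag X k \subset bag X j].

Definition width (X : seq {set V}) : nat := (\max_(B <- X) #|B|) - 1.

Definition alpha (X : seq {set V}) (H : {set V}) : nat :=
  \big[minn/(size X).+1]_(1 <= i < (size X).+1 | bag X i :&: H != set0) i.
Definition beta (X : seq {set V}) (H : {set V}) : nat :=
  \max_(1 <= i < (size X).+1 | bag X i :&: H != set0) i.

Definition induced_rel (H : {set V}) : rel V :=
  [rel x y | [&& e x y, x \in H & y \in H]].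
Definition is_component_of (S H : {set V}) : bool :=
  [&& H != set0, [disjoint H & S],
      [forall x in H, forall y in H, connect (induced_rel H) x y] &
      [forall x in H, forall y, (e x y && (y \notin S)) ==> (y \in H)]].

Definition S_component (S H : {set V}) : bool :=
  is_component_of S H && [forall s in S, exists h in H, e s h].
Definition S_branch (S H : {set V}) : bool := S_component S H && (1 < #|H|).

Definition bottleneck (S : {set V}) : bool :=
  (S != set0) && (13 <= #|[set H | S_branch S H]|).

Definition t1_cond (X : seq {set V}) (S H : {set V}) : bool :=
  S_branch S H && (S \subset bag X (alpha X H) :&: bag X (alpha X H).-1).
Definition t2_cond (X : seq {set V}) (S H : {set V}) : bool :=
  S_branch S H && (S \subset bag X (beta X H) :&: bag X (beta X H).+1).

(* The defaults are irrelevant once the index sets are shown nonempty. *)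
Definition t1 (X : seq {set V}) (S : {set V}) : nat :=
  \big[minn/(size X).+1]_(H : {set V} | t1_cond X S H) alpha X H.
Definition t2 (X : seq {set V}) (S : {set V}) : nat :=
  \max_(H : {set V} | t2_cond X S H) beta X H.

Definition green X S H := (t1 X S <= alpha X H) && (beta X H <= t2 X S).
Definition red X S H :=
  [&& alpha X H < t1 X S, t1 X S <= beta X H & beta X H <= t2 X S].
Definition blue X S H :=
  [&& t1 X S <= alpha X H, alpha X H <= t2 X S & t2 X S < beta X H].
Definition purple X S H :=
  [&& alpha X H < t1 X S, t1 X S <= t2 X S & t2 X S < beta X H].
Definition gray X S H := beta X H < t1 X S.
Definition black X S H := t2 X S < alpha X H.

End Defs.

From mathcomp Require Import all_boot zify.
Set Implicit Arguments. Unset Strict Implicit. Unset Printing Implicit Defensive.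

(* Let L be the largest index of the first bag of a vertex of S and R the
   smallest index of the last bag of one, so that S is contained in every bag
   between L and R.  Each S-component is connected and adjacent to every vertex
   of S, so its bags form an interval reaching up to L and down to R; hence a
   branch avoiding X_L starts in (L, R] and itself satisfies the condition
   defining t1, and symmetrically for X_R and t2.  Distinct components meeting
   X_i contain distinct vertices of X_i \ S, so at most k + 1 branches meet X_L,
   and as many meet X_R.  Among the at least 13 branches one therefore avoids
   both: it is green, witnesses both index sets, and forces L < R, so that
   S is contained in X_L and X_R and only k branches meet each of them.
   Finally a red, purple or gray branch starts before t1, so it meets X_L;
   blue, purple and black branches likewise meet X_R. *)

Section BigMinMax.
Variables (I : eqType) (r : seq I) (P : pred I) (F : I -> nat).

Lemma geq_bigmin d i : i \in r -> P i -> \big[minn/d]_(j <- r | P j) F j <= F i.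
Proof.
elim: r => // x s IH; rewrite inE big_cons => /orP[/eqP <- -> | /IH IHi Pi].
  exact: geq_minl.
by case: ifP => _; rewrite ?geq_min IHi ?orbT.
Qed.

Lemma geq_bigmin_idx d : \big[minn/d]_(j <- r | P j) F j <= d.
Proof.
elim: r => [|x s IH]; rewrite ?big_nil ?big_cons //.
by case: ifP => // _; rewrite geq_min IH orbT.
Qed.

Lemma leq_bigmin d m : m <= d -> (forall i, i \in r -> P i -> m <= F i) ->
  m <= \big[minn/d]_(j <- r | P j) F j.
Proof.
move=> md mF; rewrite big_seq_cond.
elim/big_ind: _ => // [x y mx my | i /andP[]]; [by rewrite leq_min mx | exact: mF].
Qed.

Lemma bigmin_attained d : \big[minn/d]_(j <- r | P j) F j < d ->
  exists2 i, (i \in r) && P i & \big[minn/d]_(j <- r | P j) F j = F i.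
Proof.
rewrite big_seq_cond; set m := \big[_/_]_(j <- r | _) _.
have : m = d \/ exists2 i, (i \in r) && P i & m = F i.
  rewrite /m; elim/big_ind: _; [by left | | by move=> i ?; right; exists i].
  by move=> x y Hx Hy; rewrite /minn; case: ifP.
by case=> [-> | //]; rewrite ltnn.
Qed.

Lemma bigmax_attained : 0 < \max_(j <- r | P j) F j ->
  exists2 i, (i \in r) && P i & \max_(j <- r | P j) F j = F i.
Proof.
rewrite big_seq_cond; set m := \big[_/_]_(j <- r | _) _.
have : m = 0 \/ exists2 i, (i \in r) && P i & m = F i.
  rewrite /m; elim/big_ind: _; [by left | | by move=> i ?; right; exists i].
  by move=> x y Hx Hy; rewrite /maxn; case: ifP.
by case=> [-> | //].
Qed.

End BigMinMax.

Section PathDecomposition.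
Variables (V : finType) (e : rel V) (X : seq {set V}).
Implicit Types (H : {set V}) (u v : V).

Definition meets H i := bag X i :&: H != set0.

Lemma meetsP H i : reflect (exists2 v, v \in H & v \in bag X i) (meets H i).
Proof.
apply: (iffP (set0Pn _)) => [[v] | [v vH vi]]; last by exists v; rewrite inE vi.
by rewrite inE => /andP[vi vH]; exists v.
Qed.

Lemma meets1 v i : meets [set v] i = (v \in bag X i).
Proof. by apply/meetsP/idP => [[u /set1P ->] // | vi]; exists v; rewrite ?set11. Qed.

Lemma bag_bounds v i : v \in bag X i -> 0 < i <= size X.
Proof. by rewrite /bag; case: ifP; rewrite ?inE. Qed.

Lemma meets_bounds H i : meets H i -> 0 < i <= size X.
Proof. by case/meetsP=> v _ /bag_bounds. Qed.

Lemma meets_mem_index H i : meets H i -> i \in index_iota 1 (size X).+1.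
Proof. by move/meets_bounds; rewrite mem_index_iota. Qed.

Lemma alpha_le H i : meets H i -> alpha X H <= i.
Proof. by move=> Hi; apply: geq_bigmin (meets_mem_index Hi) Hi. Qed.

Lemma beta_ge H i : meets H i -> i <= beta X H.
Proof. by move=> Hi; apply: (leq_bigmax_seq i (meets_mem_index Hi) Hi). Qed.

Lemma meets_alpha H i : meets H i -> meets H (alpha X H).
Proof.
move=> Hi; have /andP[_ iX] := meets_bounds Hi.
have : alpha X H < (size X).+1 by rewrite ltnS (leq_trans (alpha_le Hi) iX).
by case/bigmin_attained=> j /andP[_ Hj] E; rewrite /alpha E.
Qed.

Lemma alpha_gt0 H : 0 < alpha X H.
Proof. by apply: leq_bigmin => // i; rewrite mem_index_iota => /andP[]. Qed.

Lemma meets_beta H : 0 < beta X H -> meets H (beta X H).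
Proof. by case/bigmax_attained=> j /andP[_ Hj] E; rewrite /beta E. Qed.

Hypothesis PD : is_path_decomposition e X.

Lemma bag_cover v : exists i, v \in bag X i.
Proof. by case: PD => cover _ _; have [i _ vi] := cover v; exists i. Qed.

Lemma edge_bag u v : e u v -> exists i, (u \in bag X i) && (v \in bag X i).
Proof. by case: PD => _ edges _ /edges[i _ uvi]; exists i. Qed.

Lemma mem_bag_between v i j m :
  v \in bag X i -> v \in bag X m -> i <= j <= m -> v \in bag X j.
Proof.
move=> vi vm /andP[ij jm]; case: PD => _ _ interp.
have /andP[i0 _] := bag_bounds vi; have /andP[_ mX] := bag_bounds vm.
by apply: (subsetP (interp i j m i0 ij jm mX)); rewrite inE vi vm.
Qed.

Lemma mem_bag_alpha1 v : v \in bag X (alpha X [set v]).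
Proof. by have [i vi] := bag_cover v; rewrite -meets1 (@meets_alpha _ i) ?meets1. Qed.

Lemma mem_bag_beta1 v : v \in bag X (beta X [set v]).
Proof.
have [i vi] := bag_cover v; rewrite -meets1 meets_beta //.
by rewrite -meets1 in vi; apply: leq_trans (beta_ge vi); case/andP: (meets_bounds vi).
Qed.

Lemma alpha_le_beta H : H != set0 -> alpha X H <= beta X H.
Proof.
case/set0Pn=> v vH; have [i vi] := bag_cover v.
have Hi : meets H i by apply/meetsP; exists v.
exact: beta_ge (meets_alpha Hi).
Qed.

(* If H missed bag i, "the first bag of w comes before bag i" would be a
   property of w in H preserved along edges, yet it separates the vertices of H
   in its first bag from those in its last. *)
Lemma meets_between H i :
  {in H &, forall x y, connect (induced_rel e H) x y} ->
  alpha X H <= i <= beta X H -> meets H i.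
Proof.
move=> Hconn /andP[ai ib]; apply: contraT => Hni.
have beforeE w m : w \in H -> w \in bag X m -> (alpha X [set w] < i) = (m < i).
  move=> wH wm; apply/idP/idP => [wi | mi]; last first.
    by apply: leq_ltn_trans mi; rewrite -meets1 in wm; exact: alpha_le.
  rewrite ltnNge; apply/negP => im; case/negP: Hni; apply/meetsP; exists w => //.
  by apply: mem_bag_between (mem_bag_alpha1 w) wm _; rewrite (ltnW wi).
have cl : closed (induced_rel e H) [pred w | alpha X [set w] < i].
  move=> u v /and3P[uv uH vH]; have [m /andP[um vm]] := edge_bag uv.
  by rewrite !inE (beforeE _ _ uH um) (beforeE _ _ vH vm).
have Hb := meets_beta (leq_trans (alpha_gt0 H) (leq_trans ai ib)).
have /meetsP[a aH aa] := meets_alpha Hb; have /meetsP[b bH bb] := Hb.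
have ai' : alpha X H < i.
  by rewrite ltn_neqAle ai andbT; apply: contraNneq Hni => <-; apply/meetsP; exists a.
have := closed_connect cl (Hconn a b aH bH).
by rewrite !inE (beforeE _ _ aH aa) (beforeE _ _ bH bb) ai' ltnNge ib.
Qed.

Lemma card_bag i : #|bag X i| <= (width X).+1.
Proof.
rewrite /bag /width; case: ifP => [/andP[i0 iX] | _]; last by rewrite cards0.
have Xi : nth set0 X i.-1 \in X by rewrite mem_nth // prednK.
have := leq_bigmax_seq (P := xpredT) (F := fun B : {set V} => #|B|) _ Xi isT.
by move/leq_trans; apply; rewrite subn1 leqSpred.
Qed.

End PathDecomposition.

Section Components.
Variables (V : finType) (e : rel V) (S : {set V}).
Implicit Types (H : {set V}) (u v x y : V).

Lemma fwd_closed_connect (r : rel V) (A : {pred V}) x y :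
  (forall u v, r u v -> u \in A -> v \in A) -> connect r x y -> x \in A -> y \in A.
Proof.
move=> clA /connectP[p + ->]; elim: p x => //= z p IH x /andP[xz zp] xA.
exact: IH zp (clA _ _ xz xA).
Qed.

Lemma component_connect H : is_component_of e S H ->
  {in H &, forall x y, connect (induced_rel e H) x y}.
Proof.
case/and4P=> _ _ /forall_inP conn _ x y xH.
by move/forall_inP: (conn x xH); apply.
Qed.

Lemma component_closed H u v :
  is_component_of e S H -> u \in H -> e u v -> v \notin S -> v \in H.
Proof.
case/and4P=> _ _ _ /forall_inP cl uH uv vS.
by move/forallP/(_ v): (cl u uH); rewrite uv vS; apply.
Qed.

Lemma component_notin H v : is_component_of e S H -> v \in H -> v \notin S.
Proof. by case/and4P=> _ /disjointFr dHS _ _ /dHS ->. Qed.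

Lemma component_eq H H' x : is_component_of e S H -> is_component_of e S H' ->
  x \in H -> x \in H' -> H = H'.
Proof.
suff sub K K' : is_component_of e S K -> is_component_of e S K' ->
    x \in K -> x \in K' -> K \subset K'.
  by move=> cH cH' xH xH'; apply/eqP; rewrite eqEsubset !sub.
move=> cK cK' xK xK'; apply/subsetP=> y yK.
apply: fwd_closed_connect (component_connect cK xK yK) xK' => u v /and3P[uv _ vK] uK'.
exact: component_closed cK' uK' uv (component_notin cK vK).
Qed.

Lemma card_components_meeting (F : {set {set V}}) (A : {set V}) :
  {in F, forall H, is_component_of e S H} -> {in F, forall H, H :&: A != set0} ->
  #|F| <= #|A :\: S|.
Proof.
move=> Fcomp FA; pose f H := [pick v in H :&: A].
have fP H : H \in F -> exists2 v, f H = Some v & v \in H :&: A.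
  move=> HF; rewrite /f; case: pickP => [v vHA | none]; first by exists v.
  by case/set0Pn: (FA H HF) => v; rewrite none.
have f_inj : {in F &, injective f}.
  move=> H H' HF H'F; have [v -> /setIP[vH _]] := fP H HF.
  have [v' -> /setIP[vH' _]] := fP H' H'F; case=> vv'.
  by rewrite -vv' in vH'; apply: component_eq (Fcomp H HF) (Fcomp H' H'F) vH vH'.
rewrite -(card_in_imset f_inj) -[#|A :\: S|](card_imset _ (@Some_inj _)).
apply: subset_leq_card; apply/subsetP=> _ /imsetP[H HF ->].
have [v -> /setIP[vH vA]] := fP H HF.
by rewrite imset_f // inE vA (component_notin (Fcomp H HF) vH).
Qed.

End Components.

Section Bottleneck.
Variables (V : finType) (e : rel V) (X : seq {set V}) (S : {set V}).
Implicit Types (H : {set V}) (i : nat).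

Definition S_lo := \max_(s in S) alpha X [set s].
Definition S_hi := \big[minn/(size X).+1]_(s in S) beta X [set s].

Definition branches_at i := [set H | S_branch e S H && meets X H i].

Lemma t1_le_alpha H : t1_cond e X S H -> t1 e X S <= alpha X H.
Proof. by move=> cH; apply: geq_bigmin cH; rewrite mem_index_enum. Qed.

Lemma beta_le_t2 H : t2_cond e X S H -> beta X H <= t2 e X S.
Proof. exact: leq_bigmax_cond. Qed.

Hypothesis PD : is_path_decomposition e X.

Lemma sub_bag_S i : S_lo <= i <= S_hi -> S \subset bag X i.
Proof.
case/andP=> loi ihi; apply/subsetP=> s sS.
apply: (mem_bag_between PD (mem_bag_alpha1 PD s) (mem_bag_beta1 PD s)).
rewrite (leq_trans (leq_bigmax_cond s sS) loi) (leq_trans ihi) //.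
by apply: geq_bigmin sS; rewrite mem_index_enum.
Qed.

Lemma S_component_bounds H : S_component e S H ->
  S_lo <= beta X H /\ alpha X H <= S_hi.
Proof.
case/andP=> _ /forall_inP adj.
have near s : s \in S -> alpha X [set s] <= beta X H /\ alpha X H <= beta X [set s].
  move=> sS; have /exists_inP[h hH sh] := adj s sS.
  have [m /andP[sm hm]] := edge_bag PD sh.
  have Hm : meets X H m by apply/meetsP; exists h.
  rewrite -meets1 in sm.
  by split; [apply: leq_trans (alpha_le sm) (beta_ge Hm)
            | apply: leq_trans (alpha_le Hm) (beta_ge sm)].
split; first by apply/bigmax_leqP=> s /near[].
apply: leq_bigmin=> [|s _ /near[] //]; exact: geq_bigmin_idx.
Qed.

Lemma S_lo_lt_alpha H : S_component e S H -> ~~ meets X H S_lo -> S_lo < alpha X H.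
Proof.
move=> cH; apply: contraNT; rewrite -leqNgt => aH; apply: (meets_between PD).
  exact: component_connect (andP cH).1.
by rewrite aH (S_component_bounds cH).1.
Qed.

Lemma beta_lt_S_hi H : S_component e S H -> ~~ meets X H S_hi -> beta X H < S_hi.
Proof.
move=> cH; apply: contraNT; rewrite -leqNgt => Hb; apply: (meets_between PD).
  exact: component_connect (andP cH).1.
by rewrite Hb (S_component_bounds cH).2.
Qed.

Lemma t1_cond_after_S_lo H : S_branch e S H -> ~~ meets X H S_lo -> t1_cond e X S H.
Proof.
move=> bH nH; have cH := (andP bH).1; have loa := S_lo_lt_alpha cH nH.
have ahi := (S_component_bounds cH).2.
rewrite /t1_cond bH subsetI !sub_bag_S ?ahi ?(ltnW loa) //.
by rewrite -ltnS prednK ?loa ?(leq_trans (leq_pred _) ahi) //; case: (alpha X H) loa.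
Qed.

Lemma t2_cond_before_S_hi H : S_branch e S H -> ~~ meets X H S_hi -> t2_cond e X S H.
Proof.
move=> bH nH; have cH := (andP bH).1; have bhi := beta_lt_S_hi cH nH.
have lob := (S_component_bounds cH).1.
by rewrite /t2_cond bH subsetI !sub_bag_S ?lob ?bhi ?(ltnW bhi) ?(leq_trans lob).
Qed.

Lemma branch_alpha_le_beta H : S_branch e S H -> alpha X H <= beta X H.
Proof. by case/andP=> /andP[/and4P[H0 _ _ _] _] _; exact: (alpha_le_beta PD H0). Qed.

Lemma card_branches_at i : #|branches_at i| <= #|bag X i :\: S|.
Proof.
apply: (card_components_meeting (e := e)) => H.
  by rewrite inE => /andP[/andP[/andP[]]].
by rewrite inE setIC => /andP[].
Qed.

Lemma exists_branch_between : 2 * (width X).+1 < #|[set H | S_branch e S H]| ->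
  exists2 H, S_branch e S H & ~~ meets X H S_lo && ~~ meets X H S_hi.
Proof.
move=> many; have card_at i : #|branches_at i| <= (width X).+1.
  apply: leq_trans (card_branches_at i) (leq_trans _ (card_bag X i)).
  exact: subset_leq_card (subsetDl _ _).
have : ~~ ([set H | S_branch e S H] \subset branches_at S_lo :|: branches_at S_hi).
  apply: contraTN many => /subset_leq_card le; rewrite -leqNgt (leq_trans le) //.
  by rewrite (leq_trans (leq_card_setU _ _)) // mul2n -addnn leq_add.
by case/subsetPn=> H; rewrite !inE negb_or => bH; rewrite bH; exists H.
Qed.

Lemma card_bag_diff_S i : S != set0 -> S \subset bag X i -> #|bag X i :\: S| <= width X.
Proof.
move=> S0 Si; rewrite cardsD (setIidPr Si); have := card_bag X i.
by rewrite -card_gt0 in S0; lia.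
Qed.

Lemma left_colored_sub :
  [set H | S_branch e S H && [|| red e X S H, purple e X S H | gray e X S H]]
    \subset branches_at S_lo.
Proof.
apply/subsetP=> H; rewrite !inE => /andP[bH col]; rewrite bH /=.
have : alpha X H < t1 e X S.
  by case/or3P: col => [/and3P[] | /and3P[] | /(leq_ltn_trans (branch_alpha_le_beta bH))].
by apply: contraTT => nH; rewrite -leqNgt t1_le_alpha ?t1_cond_after_S_lo.
Qed.

Lemma right_colored_sub :
  [set H | S_branch e S H && [|| blue e X S H, purple e X S H | black e X S H]]
    \subset branches_at S_hi.
Proof.
apply/subsetP=> H; rewrite !inE => /andP[bH col]; rewrite bH /=.
have : t2 e X S < beta X H.
  case/or3P: col => [/and3P[] | /and3P[] | black] //.
  exact: leq_trans black (branch_alpha_le_beta bH).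
by apply: contraTT => nH; rewrite -leqNgt beta_le_t2 ?t2_cond_before_S_hi.
Qed.

End Bottleneck.

Theorem mainTheorem13 (V : finType) (e : rel V) (X : seq {set V}) (k : nat)
  (S : {set V}) :
  simple_graph e -> connected_graph e ->
  is_path_decomposition e X -> width X = k -> k <= 3 ->
  bottleneck e S ->
  [/\ (exists H, t1_cond e X S H),
      (exists H, t2_cond e X S H),
      t1 e X S <= t2 e X S &
      [/\ (exists H, S_branch e S H && green e X S H),
      #|[set H | S_branch e S H &&
                 [|| red e X S H, purple e X S H | gray e X S H]]| <= 2 * k
    & #|[set H | S_branch e S H &&
                 [|| blue e X S H, purple e X S H | black e X S H]]| <= 2 * k]].
Proof.
move=> _ _ PD widthX k3 /andP[S0 many].
have [H0 bH0 /andP[nlo nhi]] : exists2 H0, S_branch e S H0 &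
    ~~ meets X H0 (S_lo X S) && ~~ meets X H0 (S_hi X S).
  by apply: exists_branch_between; rewrite widthX (leq_trans _ many) //; lia.
have t1a := t1_le_alpha (t1_cond_after_S_lo PD bH0 nlo).
have bt2 := beta_le_t2 (t2_cond_before_S_hi PD bH0 nhi).
have ab := branch_alpha_le_beta PD bH0.
have loa := S_lo_lt_alpha PD (andP bH0).1 nlo.
have bhi := beta_lt_S_hi PD (andP bH0).1 nhi.
have lohi : S_lo X S <= S_hi X S.
  exact: ltnW (leq_ltn_trans (leq_trans (ltnW loa) ab) bhi).
have card_at i : S_lo X S <= i <= S_hi X S -> #|branches_at e X S i| <= 2 * k.
  move=> loihi; rewrite (leq_trans (card_branches_at e X S i)) //.
  rewrite (leq_trans (card_bag_diff_S S0 (sub_bag_S PD loihi))) // widthX; lia.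
split; [ by exists H0; exact: t1_cond_after_S_lo
      | by exists H0; exact: t2_cond_before_S_hi
      | exact: leq_trans t1a (leq_trans ab bt2) | ].
split; first by exists H0; rewrite bH0 /green t1a bt2.
- apply: leq_trans (subset_leq_card (left_colored_sub S PD)) (card_at _ _).
  by rewrite leqnn lohi.
- apply: leq_trans (subset_leq_card (right_colored_sub S PD)) (card_at _ _).
  by rewrite leqnn lohi.
Qed.
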